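(* For the $A_r$ $Q$-system with initial data $R_{\alpha,r-\alpha}=R_{\alpha,r-\alpha+1}=1$ for all $\alpha\in I_r$, $$\sum_{n\ge0}R_{1,n+r-1}\,t^n=1+t\,\frac{V_r(t)}{V_{r+1}(t)},\qquad V_m(t)=(-1)^m\,U_{2m}(\sqrt t),$$ where $U_m$ is the Chebyshev polynomial of the second kind, $U_m(2\cos\theta)=\frac{\sin(m+1)\theta}{\sin\theta}$ (each $V_m$ is a polynomial in $t$). For example, for $r=2$ the right side is $1+t\frac{1-3t+t^2}{1-6t+5t^2-t^3}$.
   Context: For $r\ge1$, $I_r=\{1,\dots,r\}$, the $A_r$ $Q$-system is the family $(R_{\alpha,n})_{0\le\alpha\le r+1,n\in\mathbb Z}$ with $R_{0,n}=R_{r+1,n}=1$ and $R_{\alpha,n+1}R_{\alpha,n-1}=R_{\alpha,n}^2+R_{\alpha+1,n}R_{\alpha-1,n}$ for $\alpha\in I_r$, $n\in\mathbb Z$; it is uniquely determined by the values $R_{\alpha,m_\alpha},R_{\alpha,m_\alpha+1}$ ($\alpha\in I_r$) for any $(m_1,\dots,m_r)\in\mathbb Z^r$ with $|m_{\alpha+1}-m_\alpha|\le1$. Here $m_\alpha=r-\alpha$. *)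

From HB Require Import structures.
From mathcomp Require Import all_boot all_order all_algebra.
Set Implicit Arguments. Unset Strict Implicit. Unset Printing Implicit Defensive.
Import Order.TTheory GRing.Theory Num.Theory.
Local Open Scope ring_scope.

(* Chebyshev polynomials of the second kind, normalised so that
   U_m(2 cos th) = sin((m+1) th) / sin th :
   U_0 = 1, U_1 = X, U_{m+1} = X U_m - U_{m-1}. *)
Fixpoint chebU_pair (m : nat) : {poly rat} * {poly rat} :=
  match m with
  | 0 => (1, 'X)
  | m'.+1 => let (a, b) := chebU_pair m' in (b, 'X * b - a)
  end.

Definition chebU (m : nat) : {poly rat} := (chebU_pair m).1.

(* V_m(t) = (-1)^m U_{2m}(sqrt t).  Since U_{2m} is an even polynomial,
   U_{2m}(sqrt t) = sum_k (U_{2m})_{2k} t^k, which has degree m. *)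
Definition chebV (m : nat) : {poly rat} :=
  \poly_(k < m.+1) ((-1) ^+ m * (chebU (2 * m))`_(2 * k)).

Definition is_Qsystem_A (r : nat) (R : nat -> int -> rat) : Prop :=
  (forall n : int, R 0%N n = 1) /\
  (forall n : int, R r.+1 n = 1) /\
  (forall (a : nat) (n : int), (1 <= a <= r)%N ->
     R a (n + 1) * R a (n - 1) = R a n ^+ 2 + R a.+1 n * R a.-1 n).

From HB Require Import structures.
From mathcomp Require Import all_boot all_order all_algebra all_fingroup.
From mathcomp Require Import zify ring.
Import Order.TTheory GRing.Theory Num.Theory.
Local Open Scope ring_scope.
Set Implicit Arguments. Unset Strict Implicit. Unset Printing Implicit Defensive.

(* The A_r Q-system with initial data R_{a,r-a} = R_{a,r-a+1} = 1 is solved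
   by Hankel determinants, which yields the generating function of R_{1,n}.

   Let J be the (r+1) x (r+1) tridiagonal matrix with diagonal 1, 2, ..., 2
   and ones next to the diagonal, and H_b(s) the b x b Hankel determinant of
   its moments (J^k)_{00}.  The proof has three parts.
   - The Desnanot-Jacobi identity, proved from the Schur complement formula,
     shows that Hankel determinants satisfy the Q-system relation.  Since
     H_b(0) = H_b(1) = H_0(s) = H_{r+1}(s) = 1, induction on n then gives
     R_{r+1-b,n} = H_b(s) whenever n + 1 = b + s; all these values are
     positive, which allows dividing by them along the induction.
   - Hankel determinants of the moments of a tridiagonal matrix are leading
     principal minors of its powers; as det J = 1, H_r(s) = ((J^-1)^s)_{rr}.
   - For a matrix B with inverse A, the adjugate of B - t gives
     det (B - t) * sum_s (A^s)_{ii} t^s = det (B - t) + t cofactor_{ii}(B - t);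
     for B = J these polynomials are V_{r+1} and V_r, since tridiagonal
     determinants and the V_m obey the same three-term recurrence. *)

Definition mat {T : Type} (n : nat) (F : nat -> nat -> T) : 'M[T]_n :=
  \matrix_(i, j) F i j.

Lemma eq_mat {T : Type} n (F G : nat -> nat -> T) :
  (forall i j, i < n -> j < n -> F i j = G i j)%N -> mat n F = mat n G.
Proof. by move=> eqFG; apply/matrixP=> i j; rewrite !mxE eqFG. Qed.

Lemma mat_minor {T : Type} n (F : nat -> nat -> T) (i0 j0 : 'I_n.+1) :
  row' i0 (col' j0 (mat n.+1 F)) = mat n (fun i j => F (bump i0 i) (bump j0 j)).
Proof. by apply/matrixP=> i j; rewrite !mxE. Qed.

Lemma mat_block {T : Type} m n (G : nat -> nat -> T) :
  mat (m + n) G =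
  block_mx (mat m G) (\matrix_(i < m, j < n) G i (m + j)%N)
           (\matrix_(i < n, j < m) G (m + i)%N j)
           (mat n (fun i j => G (m + i)%N (m + j)%N)).
Proof.
apply/matrixP=> i j; rewrite -(splitK i) -(splitK j).
by case: (split i) => i'; case: (split j) => j';
  rewrite ?block_mxEul ?block_mxEur ?block_mxEdl ?block_mxEdr !mxE.
Qed.

Section Permutations.
Variable R : comPzRingType.

Lemma det_row_perm n (s : 'S_n) (A : 'M[R]_n) :
  \det (\matrix_(i, j) A (s i) j) = (-1) ^+ s * \det A.
Proof.
have -> : \matrix_(i, j) A (s i) j = row_perm s A by apply/matrixP=> i j; rewrite !mxE.
by rewrite row_permE det_mulmx det_perm.
Qed.

Lemma det_col_perm n (s : 'S_n) (A : 'M[R]_n) :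
  \det (\matrix_(i, j) A i (s j)) = (-1) ^+ s * \det A.
Proof.
have -> : \matrix_(i, j) A i (s j) = col_perm s A by apply/matrixP=> i j; rewrite !mxE.
by rewrite col_permE det_mulmx det_perm odd_permV mulrC.
Qed.

Lemma det_conj_perm n (s : 'S_n) (A : 'M[R]_n) :
  \det (\matrix_(i, j) A (s i) (s j)) = \det A.
Proof.
have -> : \matrix_(i, j) A (s i) (s j) = \matrix_(i, j) (col_perm s A) (s i) j.
  by apply/matrixP=> i j; rewrite !mxE.
by rewrite det_row_perm col_permE det_mulmx det_perm odd_permV mulrCA -expr2
  sqrr_sign mulr1.
Qed.

End Permutations.

Section DesnanotJacobi.
Variable K : fieldType.

Lemma det_block_schur m n (A : 'M[K]_m) U W (D : 'M[K]_n) : D \in unitmx ->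
  \det (block_mx A U W D) = \det D * \det (A - U *m invmx D *m W).
Proof.
move=> uD.
have -> : block_mx A U W D = block_mx 1%:M (U *m invmx D) 0 1%:M *m
                             block_mx (A - U *m invmx D *m W) 0 W D.
  rewrite mulmx_block !mul1mx !mul0mx ?mulmx0 ?add0r ?addr0.
  by rewrite -[U *m invmx D *m D]mulmxA mulVmx // mulmx1 subrK.
by rewrite det_mulmx det_ublock det_lblock !det1 !mul1r mulrC.
Qed.

Lemma det_mx2 (S : 'M[K]_2) :
  \det S = S ord0 ord0 * S ord_max ord_max - S ord0 ord_max * S ord_max ord0.
Proof.
rewrite (expand_det_row _ 0) !big_ord_recl big_ord0 addr0 /cofactor !det_mx11.
rewrite !mxE /= expr0 expr1 !mul1r mulN1r mulrN.
by congr (_ * _ - _ * _); congr (S _ _); apply/val_inj.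
Qed.

(* border p i enumerates the index p (0 or 1) followed by 2, 3, ...: the
   rows and columns of a minor that keeps one of the first two rows (or
   columns) together with all the later ones. *)
Definition border (p i : nat) : nat := if i == 0%N then p else i.+1.

Lemma border1 i : border 1 i = i.+1. Proof. by case: i. Qed.

Section Corner.
Variables (n : nat) (G : nat -> nat -> K).
Let D := mat n (fun i j => G i.+2 j.+2).
Let schur : 'M[K]_2 := \matrix_(i < 2, j < n) G i (2 + j)%N *m invmx D *m
                       \matrix_(i < n, j < 2) G (2 + i)%N j.
Hypothesis D_neq0 : \det D != 0.

Lemma interior_unit : D \in unitmx. Proof. by rewrite unitmxE unitfE. Qed.

Lemma det_bordered (p q : 'I_2) :
  \det (mat n.+1 (fun i j => G (border p i) (border q j))) =
  \det D * (G p q - schur p q).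
Proof.
rewrite -[n.+1]/(1 + n)%N mat_block.
have -> : mat n (fun i j => G (border p (1 + i)) (border q (1 + j))) = D.
  by apply: eq_mat => i j _ _; rewrite /border !add1n.
rewrite det_block_schur ?interior_unit // det_mx11 !mxE; congr (_ * (_ - _)).
apply: eq_bigr => k _; rewrite !mxE; congr (_ * _).
by apply: eq_bigr => l _; rewrite !mxE /border !add1n add2n.
Qed.

Lemma desnanot_jacobi_corner :
  \det (mat n.+2 G) * \det D =
  \det (mat n.+1 (fun i j => G (border 1 i) (border 1 j))) *
    \det (mat n.+1 (fun i j => G (border 0 i) (border 0 j))) -
  \det (mat n.+1 (fun i j => G (border 1 i) (border 0 j))) *
    \det (mat n.+1 (fun i j => G (border 0 i) (border 1 j))).
Proof.
have -> : 1%N = @ord_max 1 by [].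
have -> : 0%N = @ord0 1 by [].
rewrite !det_bordered -[n.+2]/(2 + n)%N mat_block det_block_schur ?interior_unit //.
rewrite -/D -/schur; move: schur (\det D) => S d.
by rewrite det_mx2 !mxE /=; ring.
Qed.

End Corner.

(* The order 0, n+1, 1, 2, ..., n of the indices [0, n+2), which moves the
   first and the last index into the top-left 2 x 2 corner. *)
Definition corner_index (n k : nat) : nat :=
  if k == 0%N then 0%N else if k == 1%N then n.+1 else k.-1.

Definition rotate_down n : 'S_n.+1 := perm (@ord_pred_inj n.+1).
Definition corner_perm n : 'S_n.+2 := lift_perm ord0 ord0 (rotate_down n).

Lemma rotate_downE n (i : 'I_n.+1) :
  val (rotate_down n i) = if val i == 0%N then n else (val i).-1.
Proof.
rewrite /rotate_down permE; case: i => [[|k] lt] /=; first by rewrite modn_small.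
by rewrite modnDr modn_small // ltnW.
Qed.

Lemma corner_permE n (i : 'I_n.+2) : val (corner_perm n i) = corner_index n i.
Proof.
case: (unliftP ord0 i) => [k|] ->; rewrite /corner_perm ?lift_perm_id //.
rewrite lift_perm_lift /= /bump !add1n rotate_downE /corner_index /=.
by case: k => [[|k] ?].
Qed.

Lemma desnanot_jacobi n (F : nat -> nat -> K) :
  \det (mat n (fun i j => F i.+1 j.+1)) != 0 ->
  \det (mat n.+2 F) * \det (mat n (fun i j => F i.+1 j.+1)) =
  \det (mat n.+1 (fun i j => F i.+1 j.+1)) * \det (mat n.+1 F) -
  \det (mat n.+1 (fun i j => F i.+1 j)) * \det (mat n.+1 (fun i j => F i j.+1)).
Proof.
move=> nz; pose G i j := F (corner_index n i) (corner_index n j).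
have corner_S (i : 'I_n.+1) : corner_index n i.+1 = (rotate_down n i).+1.
  by rewrite rotate_downE /corner_index; case: i => [[|i] ?].
have corner_border0 i : corner_index n (border 0 i) = i by case: i.
have := @desnanot_jacobi_corner n G nz.
have -> : mat n.+2 G = \matrix_(i, j) (mat n.+2 F) (corner_perm n i) (corner_perm n j).
  by apply/matrixP=> i j; rewrite !mxE !corner_permE.
have -> : mat n.+1 (fun i j => G (border 1 i) (border 1 j)) =
    \matrix_(i, j) (mat n.+1 (fun i j => F i.+1 j.+1)) (rotate_down n i) (rotate_down n j).
  by apply/matrixP=> i j; rewrite !mxE /G !border1 !corner_S.
have -> : mat n.+1 (fun i j => G (border 0 i) (border 0 j)) = mat n.+1 F.
  by apply/matrixP=> i j; rewrite !mxE /G !corner_border0.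
have -> : mat n.+1 (fun i j => G (border 1 i) (border 0 j)) =
    \matrix_(i, j) (mat n.+1 (fun i j => F i.+1 j)) (rotate_down n i) j.
  by apply/matrixP=> i j; rewrite !mxE /G border1 corner_S corner_border0.
have -> : mat n.+1 (fun i j => G (border 0 i) (border 1 j)) =
    \matrix_(i, j) (mat n.+1 (fun i j => F i j.+1)) i (rotate_down n j).
  by apply/matrixP=> i j; rewrite !mxE /G border1 corner_S corner_border0.
rewrite !det_conj_perm det_row_perm det_col_perm => ->.
by rewrite mulrACA -expr2 sqrr_sign mul1r.
Qed.

End DesnanotJacobi.

Definition hankel (R : comPzRingType) (c : nat -> R) (b s : nat) : R :=
  \det (mat b (fun i j => c (s + i + j)%N)).

Lemma hankel0 (R : comPzRingType) (c : nat -> R) s : hankel c 0 s = 1.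
Proof. exact: det_mx00. Qed.

Lemma hankel_Qsystem (K : fieldType) (c : nat -> K) n s :
  hankel c n s.+2 != 0 ->
  hankel c n.+1 s.+2 * hankel c n.+1 s =
  hankel c n.+1 s.+1 ^+ 2 + hankel c n s.+2 * hankel c n.+2 s.
Proof.
move=> nz; pose F i j := c (s + i + j)%N.
have hankelF b t (G : nat -> nat -> K) :
    (forall i j, G i j = c (t + i + j)%N) -> \det (mat b G) = hankel c b t.
  by move=> eG; rewrite /hankel; congr (\det _); apply: eq_mat => i j _ _.
have := @desnanot_jacobi K n F.
rewrite (hankelF n s.+2) => [|i j]; last by rewrite /F !addnS !addSn.
rewrite (hankelF n.+2 s) // (hankelF n.+1 s.+2) => [|i j]; last by rewrite /F !addnS !addSn.
rewrite (hankelF n.+1 s) // (hankelF n.+1 s.+1) => [|i j]; last by rewrite /F !addnS.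
rewrite (hankelF n.+1 s.+1) => [|i j]; last by rewrite /F !addnS !addSn.
move=> /(_ nz) dj; rewrite -expr2 in dj.
by rewrite [_ * hankel c n.+2 s]mulrC dj addrC subrK.
Qed.

Lemma sign_double (R : pzRingType) k : (-1) ^+ (k + k)%N = 1 :> R.
Proof. by rewrite -signr_odd oddD addbb. Qed.

Lemma bump_lt h i : (i < h)%N -> bump h i = i.
Proof. by move=> lt_ih; rewrite /bump leqNgt lt_ih. Qed.

Lemma bump_ge h i : (h <= i)%N -> bump h i = i.+1.
Proof. by move=> le_hi; rewrite /bump le_hi add1n. Qed.

Section Tridiagonal.
Variables (R : comPzRingType) (d0 d : R).

Definition tridiag_entry (i j : nat) : R :=
  if i == j then (if i == 0%N then d0 else d)
  else if (i.+1 == j) || (j.+1 == i) then 1 else 0.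

Definition tridiag (m : nat) : 'M[R]_m := mat m tridiag_entry.

Lemma tridiag_entry_diag k : tridiag_entry k.+1 k.+1 = d.
Proof. by rewrite /tridiag_entry eqxx. Qed.

Lemma tridiag_entry_sup k : tridiag_entry k k.+1 = 1.
Proof. by rewrite /tridiag_entry (ltn_eqF (ltnSn k)) eqxx. Qed.

Lemma tridiag_entry_sub k : tridiag_entry k.+1 k = 1.
Proof. by rewrite /tridiag_entry (gtn_eqF (ltnSn k)) eqxx orbT. Qed.

Lemma tridiag_entry_far i j :
  (i.+1 < j)%N -> tridiag_entry i j = 0 /\ tridiag_entry j i = 0.
Proof.
move=> lt_i1j; have lt_ij : (i < j)%N := ltnW lt_i1j.
rewrite /tridiag_entry (ltn_eqF lt_ij) (gtn_eqF lt_ij) (ltn_eqF lt_i1j).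
by rewrite (gtn_eqF (leqW lt_ij)) orbF.
Qed.

Lemma tridiag_entryC i j : tridiag_entry i j = tridiag_entry j i.
Proof. by rewrite /tridiag_entry eq_sym orbC; case: eqP => // ->. Qed.

(* Expanding along the last row and then the last column gives the
   three-term recurrence D_{m+2} = d D_{m+1} - D_m of the determinants. *)
Lemma det_tridiag_rec m :
  \det (tridiag m.+2) = d * \det (tridiag m.+1) - \det (tridiag m).
Proof.
rewrite /tridiag (expand_det_row _ ord_max) !big_ord_recr /=.
rewrite big1 ?add0r => [|j _]; last first.
  by rewrite !mxE (tridiag_entry_far (ltn_ord j : j.+1 < m.+1)%N).2 mul0r.
rewrite !mxE /= tridiag_entry_sub tridiag_entry_diag mul1r addrC.
congr (_ + _).
  rewrite /cofactor mat_minor /= sign_double mul1r; congr (_ * \det _).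
  by apply: eq_mat => i j lt_im lt_jm; rewrite !bump_lt // ltnW.
rewrite /cofactor mat_minor /= addSn exprS sign_double mulr1 mulN1r.
rewrite (expand_det_col _ ord_max) big_ord_recr /= big1 ?add0r => [|i _]; last first.
  rewrite !mxE bump_lt // bump_ge ?(ltnW (ltn_ord i)) //.
  by rewrite (tridiag_entry_far (ltn_ord i : i.+1 < m.+1)%N).1 mul0r.
rewrite !mxE /= bump_lt // bump_ge // tridiag_entry_sup mul1r.
rewrite /cofactor mat_minor /= sign_double !mul1r; congr (- \det _).
by apply: eq_mat => i j lt_im lt_jm; rewrite !bump_lt // ltnW.
Qed.

(* Since the superdiagonal consists of ones, the first row of the k-th power
   of the tridiagonal matrix has a 1 in column k and zeros beyond it. *)
Lemma tridiag_pow_row0 m k (l : 'I_m.+1) :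
  (k <= l)%N -> (tridiag m.+1 ^+ k) ord0 l = (k == l :> nat)%:R.
Proof.
elim: k l => [|k IHk] l le_kl; first by rewrite expr0 mxE -val_eqE.
rewrite exprSr -mulmxE mxE.
have lt_km : (k < m.+1)%N := leq_ltn_trans (ltnW le_kl) (ltn_ord l).
rewrite (bigD1 (Ordinal lt_km)) //= IHk // eqxx mul1r !mxE big1 ?addr0 => [|j ne_jk].
  rewrite /tridiag_entry /= (ltn_eqF le_kl).
  by rewrite (gtn_eqF (ltnW le_kl : k < l.+1)%N) orbF; case: eqP.
have [le_kj|lt_jk] := leqP k j.
  by move: ne_jk; rewrite IHk // -val_eqE eq_sym /= => /negbTE ->; rewrite mul0r.
by rewrite mxE (tridiag_entry_far (leq_ltn_trans lt_jk le_kl)).1 mulr0.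
Qed.

Lemma tridiag_pow_sym m k (i j : 'I_m) :
  (tridiag m ^+ k) i j = (tridiag m ^+ k) j i.
Proof.
have trT : (tridiag m)^T = tridiag m.
  by apply/matrixP=> i' j'; rewrite !mxE tridiag_entryC.
suff symTk : (tridiag m ^+ k)^T = tridiag m ^+ k by rewrite -{1}symTk mxE.
elim: k => [|k IHk]; first by rewrite !expr0 trmx1.
by rewrite exprS -mulmxE trmx_mul IHk trT mulmxE -exprS exprSr.
Qed.

Definition tridiag_moment m k : R := (tridiag m.+1 ^+ k) ord0 ord0.

End Tridiagonal.

Definition leading {R : Type} m b (M : 'M[R]_m.+1) : 'M[R]_b :=
  mat b (fun i j => M (inord i) (inord j)).

Lemma big_ord_trunc (V : nmodType) n b (F : 'I_n.+1 -> V) : (b <= n.+1)%N ->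
  (forall l : 'I_n.+1, (b <= l)%N -> F l = 0) ->
  \sum_(l < n.+1) F l = \sum_(l < b) F (inord l).
Proof.
move=> le_bn F0; rewrite (big_ord_widen _ (fun l => F (inord l)) le_bn).
rewrite [RHS]big_mkcond; apply: eq_bigr => l _; rewrite inord_val.
by case: ltnP => // /F0.
Qed.

(* Hankel determinants of the moments of a tridiagonal matrix T are leading
   principal minors of powers of T: the Hankel matrix factors as
   Y * leading (T^s) * Y^T with Y unitriangular, Y_{il} = (T^i)_{0l}. *)
Lemma hankel_tridiag_moment (R : comPzRingType) (d0 d : R) m b s :
  (b <= m.+1)%N ->
  hankel (tridiag_moment d0 d m) b s = \det (leading b (tridiag d0 d m.+1 ^+ s)).
Proof.
move=> le_bm; set T := tridiag d0 d m.+1.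
pose Y := mat b (fun i l => (T ^+ i) ord0 (inord l)).
have inordK_b l : (l < b)%N -> ((inord l : 'I_m.+1) : nat) = l.
  by move=> lt_lb; rewrite inordK // (leq_trans lt_lb).
have row0_far i (l : 'I_m.+1) : (i < b)%N -> (b <= l)%N -> (T ^+ i) ord0 l = 0.
  move=> lt_ib le_bl; rewrite tridiag_pow_row0 ?(ltn_eqF (leq_trans lt_ib le_bl)) //.
  exact: ltnW (leq_trans lt_ib le_bl).
rewrite /hankel; have -> : mat b (fun i j => tridiag_moment d0 d m (s + i + j)) =
          Y *m leading b (T ^+ s) *m Y^T.
  apply/matrixP=> i j; rewrite !mxE /tridiag_moment (addnC s i) !exprD.
  rewrite -!mulmxE mxE (big_ord_trunc le_bm) => [|l le_bl]; last first.
    by rewrite tridiag_pow_sym row0_far ?mulr0.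
  apply: eq_bigr => l _; rewrite !mxE tridiag_pow_sym; congr (_ * _).
  rewrite (big_ord_trunc le_bm) => [|l' le_bl']; last first.
    by rewrite row0_far ?mul0r.
  by apply: eq_bigr => l' _; rewrite !mxE.
have detY : \det Y = 1.
  rewrite det_trig; last first.
    apply/is_trig_mxP => i l lt_il.
    by rewrite mxE tridiag_pow_row0 ?inordK_b ?(ltn_eqF lt_il) // ltnW.
  by apply: big1 => i _; rewrite mxE tridiag_pow_row0 inordK_b ?eqxx.
by rewrite !det_mulmx det_tr detY mul1r mulr1.
Qed.

(* The leading minors of J all have determinant 1: D_{m+2} = 2 D_{m+1} - D_m
   with D_0 = D_1 = 1. *)
Lemma det_tridiag_one_two (R : comPzRingType) m :
  \det (tridiag (1 : R) 2%:R m) = 1.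
Proof.
suff : \det (tridiag (1 : R) 2%:R m) = 1 /\ \det (tridiag (1 : R) 2%:R m.+1) = 1.
  by case.
elim: m => [|m [IHm IHm1]]; first by rewrite det_mx00 det_mx11 mxE.
by split=> //; rewrite det_tridiag_rec IHm IHm1 mulr1 mulr2n addrK.
Qed.

Lemma chebU_rec m : chebU m.+2 = 'X * chebU m.+1 - chebU m.
Proof. by rewrite /chebU /=; case: (chebU_pair m). Qed.

Lemma size_chebU m : (size (chebU m) <= m.+1)%N.
Proof.
elim/ltn_ind: m => -[|[|m]] IHm; first by rewrite size_poly1.
  by rewrite size_polyX.
rewrite chebU_rec (leq_trans (size_polyD _ _)) // geq_max size_polyN.
apply/andP; split; last by rewrite (leq_trans (IHm m _)) // ltnW.
by rewrite (leq_trans (size_polyMleq _ _)) // size_polyX add2n ltnS IHm.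
Qed.

Lemma coef_chebU_gt m k : (m < k)%N -> (chebU m)`_k = 0.
Proof. by move=> lt_mk; rewrite nth_default // (leq_trans (size_chebU m)). Qed.

Lemma chebU_even_rec m :
  chebU (2 * m.+2) = ('X * 'X - 2%:R) * chebU (2 * m.+1) - chebU (2 * m).
Proof. by rewrite !mulnS !add2n !chebU_rec; ring. Qed.

(* U_{2m}(sqrt t), a polynomial of degree m in t: U_{2m} is even. *)
Definition chebU_sqrt (m : nat) : {poly rat} :=
  \poly_(k < m.+1) (chebU (2 * m))`_(2 * k).

Lemma coef_chebU_sqrt m k : (chebU_sqrt m)`_k = (chebU (2 * m))`_(2 * k).
Proof.
rewrite coef_poly; case: ltnP => // le_mk.
by rewrite coef_chebU_gt // ltn_pmul2l.
Qed.

(* V_m = (-1)^m U_{2m}(sqrt t), which turns the recurrence of U into that of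
   V. *)
Lemma chebV_sqrt m : chebV m = (-1) ^+ m *: chebU_sqrt m.
Proof.
apply/polyP=> k; rewrite coefZ coef_chebU_sqrt /chebV coef_poly.
by case: ltnP => // le_mk; rewrite coef_chebU_gt ?mulr0 // ltn_pmul2l.
Qed.

Lemma chebU_sqrt_rec m :
  chebU_sqrt m.+2 = ('X - 2%:R) * chebU_sqrt m.+1 - chebU_sqrt m.
Proof.
apply/polyP=> -[|k]; rewrite coef_chebU_sqrt chebU_even_rec !(coefB, mulrBl).
  by rewrite -mulrA !coefXM !mulr_natl !coefMn !coef_chebU_sqrt.
by rewrite -mulrA !coefXM !mulr_natl !coefMn !coef_chebU_sqrt mulnS add2n.
Qed.

Lemma chebV_rec m : chebV m.+2 = (2%:R - 'X) * chebV m.+1 - chebV m.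
Proof.
rewrite !chebV_sqrt chebU_sqrt_rec !exprS !mulN1r opprK scalerBr.
by congr (_ - _); rewrite scaleNr mulrN -mulNr opprB scalerAr.
Qed.

Lemma chebV0 : chebV 0 = 1.
Proof.
apply/polyP=> k; rewrite /chebV coef_poly coef1 muln0 /chebU /= coef1.
by case: k => [|k] //=; rewrite expr0 mul1r.
Qed.

Lemma chebV1 : chebV 1 = 1 - 'X.
Proof.
apply/polyP=> k; rewrite /chebV coef_poly muln1 chebU_rec /chebU /=.
rewrite !coefB !coef1 coefXM !coefX expr1 mulN1r.
by case: k => [|[|k]] /=; rewrite ?subr0 ?sub0r ?opprK.
Qed.

Lemma det_tridiag_chebV m : \det (tridiag (1 - 'X) (2%:R - 'X) m) = chebV m.
Proof.
suff : \det (tridiag (1 - 'X) (2%:R - 'X) m) = chebV m /\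
       \det (tridiag (1 - 'X) (2%:R - 'X) m.+1) = chebV m.+1 by case.
elim: m => [|m [IHm IHm1]].
  by rewrite det_mx00 chebV0 det_mx11 mxE chebV1.
by split=> //; rewrite det_tridiag_rec chebV_rec IHm IHm1.
Qed.

Section ResolventSeries.
Variables (R : comNzRingType) (m : nat) (B A : 'M[R]_m).
Hypothesis BA : B *m A = 1%:M.

Definition shift_mx : 'M[{poly R}]_m := map_mx polyC B - 'X%:M.
Definition adj_coef (j : nat) : 'M[R]_m :=
  map_mx (fun p : {poly R} => p`_j) (\adj shift_mx).

(* Comparing coefficients of t^j in adj (B - t) * (B - t) = det (B - t). *)
Lemma adj_coef_rec j :
  adj_coef j *m B =
  ((\det shift_mx)`_j)%:M + (if j is j'.+1 then adj_coef j' else 0).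
Proof.
have := mul_adj_mx shift_mx; rewrite {2}/shift_mx mulmxBr mul_mx_scalar.
move/matrixP=> adjP; apply/matrixP=> i k.
have := congr1 (coefp j) (adjP i k).
rewrite !mxE /= coefB coef_sum coefXM coefMn => coef_j.
rewrite -coef_j; under eq_bigr => l _ do rewrite !mxE.
rewrite -(eq_bigr _ (fun l _ => coefMC _ _ _)).
under [in RHS]eq_bigr => l _ do rewrite !mxE.
by case: j {coef_j} => [|j] /=; rewrite !mxE ?subr0 ?addr0 ?subrK.
Qed.

(* With A a right inverse of B: sum_{k <= n} chi_k A^(n-k) = M_n B, where
   chi = det (B - t); i.e. det (B - t) (1 - t A)^-1 = adj (B - t) B. *)
Lemma resolvent_series n :
  \sum_(k < n.+1) (\det shift_mx)`_k *: A ^+ (n - k) = adj_coef n *m B.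
Proof.
elim: n => [|n IHn]; first by rewrite big_ord1 expr0 scalemx1 adj_coef_rec addr0.
rewrite big_ord_recr /= subnn expr0 scalemx1 adj_coef_rec addrC; congr (_ + _).
under eq_bigr => k _ do rewrite /= subSn ?leq_ord // exprSr -mulmxE scalemxAl.
by rewrite -mulmx_suml IHn -mulmxA BA mulmx1.
Qed.

Lemma resolvent_series_diag i n :
  \sum_(k < n.+1) (\det shift_mx)`_k * (A ^+ (n - k)) i i =
  (\det shift_mx + 'X * cofactor shift_mx i i)`_n.
Proof.
have -> : \sum_(k < n.+1) (\det shift_mx)`_k * (A ^+ (n - k)) i i =
    (\sum_(k < n.+1) (\det shift_mx)`_k *: A ^+ (n - k)) i i.
  by rewrite summxE; apply: eq_bigr => k _; rewrite mxE.
rewrite resolvent_series adj_coef_rec coefD coefXM.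
by case: n => [|n] /=; rewrite !mxE eqxx mulr1n ?addr0.
Qed.

End ResolventSeries.

Section JacobiMatrix.
Variable r : nat.

Definition jacobi : 'M[rat]_r.+1 := tridiag 1 2%:R r.+1.
Definition jacobi_hankel (b s : nat) : rat := hankel (tridiag_moment 1 2%:R r) b s.

Lemma det_jacobi_pow s : \det (jacobi ^+ s) = 1.
Proof.
elim: s => [|s IHs]; first by rewrite expr0 det1.
by rewrite exprS -mulmxE det_mulmx IHs det_tridiag_one_two mulr1.
Qed.

Lemma jacobi_hankel_s0 b : (b <= r.+1)%N -> jacobi_hankel b 0 = 1.
Proof.
move=> le_br; rewrite /jacobi_hankel hankel_tridiag_moment // expr0.
suff -> : leading b (1%:M : 'M[rat]_r.+1) = 1%:M by rewrite det1.
apply/matrixP=> i j; rewrite !mxE -!val_eqE /= !inordK //.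
  exact: leq_trans (ltn_ord j) le_br.
exact: leq_trans (ltn_ord i) le_br.
Qed.

Lemma jacobi_hankel_s1 b : (b <= r.+1)%N -> jacobi_hankel b 1 = 1.
Proof.
move=> le_br; rewrite /jacobi_hankel hankel_tridiag_moment // expr1.
suff -> : leading b (tridiag 1 2%:R r.+1) = tridiag (1 : rat) 2%:R b.
  exact: det_tridiag_one_two.
apply/matrixP=> i j; rewrite !mxE /= !inordK //.
  exact: leq_trans (ltn_ord j) le_br.
exact: leq_trans (ltn_ord i) le_br.
Qed.

Lemma jacobi_hankel_full s : jacobi_hankel r.+1 s = 1.
Proof.
rewrite /jacobi_hankel hankel_tridiag_moment // -[RHS](det_jacobi_pow s).
by congr (\det _); apply/matrixP=> i j; rewrite !mxE !inord_val.
Qed.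

(* The r x r Hankel determinants are the last diagonal entries of the powers
   of J^-1 = adj J (det J = 1). *)
Lemma jacobi_hankel_last s :
  jacobi_hankel r s = (\adj jacobi ^+ s) ord_max ord_max.
Proof.
have adj_pow : \adj (jacobi ^+ s) = \adj jacobi ^+ s.
  have inv_pow : jacobi ^+ s *m \adj jacobi ^+ s = 1%:M.
    elim: s => [|s IHs]; first by rewrite !expr0 mulmx1.
    rewrite exprSr exprS -!mulmxE mulmxA -(mulmxA _ jacobi) mul_mx_adj.
    by rewrite det_tridiag_one_two mulmx1 IHs.
  by rewrite -[LHS]mulmx1 -inv_pow mulmxA mul_adj_mx det_jacobi_pow mul1mx.
rewrite /jacobi_hankel hankel_tridiag_moment // -adj_pow mxE /cofactor.
rewrite sign_double mul1r; congr (\det _); apply/matrixP=> i j; rewrite !mxE.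
by congr (fun_of_matrix (_ ^+ s) _ _); apply/val_inj;
  rewrite /= inordK ?bump_lt // leqW.
Qed.

(* J - t is tridiagonal with diagonal 1 - t, 2 - t, ..., 2 - t; hence
   det (J - t) = V_{r+1} and its last diagonal cofactor is V_r. *)
Lemma shift_jacobi : shift_mx jacobi = tridiag (1 - 'X) (2%:R - 'X) r.+1.
Proof.
apply/matrixP=> i j; rewrite !mxE /tridiag_entry -val_eqE /=.
case: eqP => [->|_]; first by case: eqP; rewrite mulr1n ?polyC1 ?polyC_natr.
by case: ifP; rewrite mulr0n subr0 ?polyC1 ?polyC0.
Qed.

Lemma jacobi_hankel_series n :
  \sum_(k < n.+1) (chebV r.+1)`_k * jacobi_hankel r (n - k) =
  (chebV r.+1 + 'X * chebV r)`_n.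
Proof.
have inv_jacobi : jacobi *m \adj jacobi = 1%:M.
  by rewrite mul_mx_adj det_tridiag_one_two.
have last_cofactor : cofactor (shift_mx jacobi) ord_max ord_max = chebV r.
  rewrite shift_jacobi /cofactor sign_double mul1r mat_minor -det_tridiag_chebV.
  by congr (\det _); apply: eq_mat => i j lt_ir lt_jr; rewrite !bump_lt.
rewrite -last_cofactor -(det_tridiag_chebV r.+1) -shift_jacobi.
rewrite -(resolvent_series_diag inv_jacobi); apply: eq_bigr => k _.
by rewrite jacobi_hankel_last.
Qed.

End JacobiMatrix.

Section QsystemSolution.
Variables (r : nat) (R : nat -> int -> rat).
Hypothesis Qsys : is_Qsystem_A r R.
Hypothesis init : forall a : nat, (1 <= a <= r)%N ->
  R a (r - a)%N%:Z = 1 /\ R a ((r - a)%N%:Z + 1) = 1.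

Local Notation H := (jacobi_hankel r).

(* The boundary
   rows alpha = r+1 and alpha = 0 correspond to H_0 = 1 and H_{r+1} = 1. *)
Lemma Qsystem_hankel N b s : (b <= r.+1)%N -> N.+1 = (b + s)%N ->
  R (r.+1 - b) N%:Z = H b s /\ 0 < H b s.
Proof.
have [R0 [Rlast Rrel]] := Qsys.
elim/ltn_ind: N b s => N IH [|n] s le_br eqN.
  by rewrite subn0 Rlast /jacobi_hankel hankel0 ltr01.
have [->|ne_nr] := eqVneq n r.
  by rewrite subnn R0 jacobi_hankel_full ltr01.
have lt_nr : (n < r)%N by rewrite ltn_neqAle ne_nr.
have a_range : (1 <= r.+1 - n.+1 <= r)%N by lia.
case: s eqN => [|[|t]] eqN.
- have -> : N = (r - (r.+1 - n.+1))%N by lia.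
  by have [-> _] := init a_range; rewrite jacobi_hankel_s0 ?ltr01.
- have -> : N%:Z = (r - (r.+1 - n.+1))%N%:Z + 1 by lia.
  by have [_ ->] := init a_range; rewrite jacobi_hankel_s1 ?ltr01.
(* Interior case: by induction, the Q-system relation at (r+1-b, N-1) is the
   Hankel relation with R_{r+1-b,N} in place of H_b(s). *)
have [Rn1 Hn1_gt0] := IH (n + t).+1 (ltac:(lia)) n.+1 t.+1 le_br (ltac:(lia)).
have [Rn0 Hn0_gt0] := IH (n + t)%N (ltac:(lia)) n.+1 t le_br (ltac:(lia)).
have [Rup Hup_gt0] := IH (n + t).+1 (ltac:(lia)) n t.+2 (ltac:(lia)) (ltac:(lia)).
have [Rdown Hdown_gt0] := IH (n + t).+1 (ltac:(lia)) n.+2 t (ltac:(lia)) (ltac:(lia)).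
have := Rrel (r.+1 - n.+1)%N (n + t).+1%:Z a_range.
have -> : (n + t).+1%:Z + 1 = N%:Z by lia.
have -> : (n + t).+1%:Z - 1 = (n + t)%N%:Z by lia.
have -> : (r.+1 - n.+1).+1 = (r.+1 - n)%N by lia.
have -> : (r.+1 - n.+1).-1 = (r.+1 - n.+2)%N by lia.
rewrite Rn1 Rn0 Rup Rdown => rel.
have rhs_gt0 : 0 < H n.+1 t.+1 ^+ 2 + H n t.+2 * H n.+2 t.
  by rewrite addr_gt0 ?exprn_gt0 ?mulr_gt0.
rewrite -(hankel_Qsystem (lt0r_neq0 Hup_gt0)) in rel rhs_gt0.
split; first exact: (mulIf (lt0r_neq0 Hn0_gt0)).
by rewrite -(pmulr_lgt0 _ Hn0_gt0).
Qed.

End QsystemSolution.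

Theorem mainTheorem16 (r : nat) (R : nat -> int -> rat) :
  (0 < r)%N ->
  is_Qsystem_A r R ->
  (forall a : nat, (1 <= a <= r)%N ->
     R a (r - a)%N%:Z = 1 /\ R a ((r - a)%N%:Z + 1) = 1) ->
  forall n : nat,
    \sum_(k < n.+1) (chebV r.+1)`_k * R 1%N ((n - k)%N%:Z + r%:Z - 1)
    = (chebV r.+1 + 'X * chebV r)`_n.
Proof.
move=> r_gt0 Qsys init n; rewrite -jacobi_hankel_series.
apply: eq_bigr => k _; congr (_ * _).
have index_eq : (n - k)%N%:Z + r%:Z - 1 = (r.-1 + (n - k))%N%:Z by lia.
have index_S : ((r.-1 + (n - k)).+1 = r + (n - k))%N by lia.
have [<- _] := Qsystem_hankel Qsys init (leqnSn r) index_S.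
by rewrite index_eq subSn // subnn.
Qed.
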